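(* In $Y_R(\mathfrak{so}_3)$: $$3e_{-1,1}(u+\tfrac12)-e_{-1,1}(u)+3e_{-1,0}(u+\tfrac12)e_{-1,0}(u)-2e_{-1,0}(u)^2=0.$$
   Context: Let $e_{ij}$ ($i,j\in\{-1,0,1\}$) be the matrix units of $\mathrm{End}\,\mathbb{C}^3$, with rows and columns indexed by $-1,0,1$. Let $P=\sum_{i,j}e_{ij}\otimes e_{ji}$, $Q=\sum_{i,j}e_{ij}\otimes e_{-i,-j}$ and $R(u)=1-\frac{P}{u}+\frac{Q}{u-\frac12}$. Let $t$ be the transposition on $\mathrm{End}\,\mathbb{C}^3$ given by $(e_{ij})^t=e_{-j,-i}$. The algebra $Y_R(\mathfrak{so}_3)$ is the unital associative algebra over $\mathbb{C}$ generated by elements $t_{ij}^{(r)}$, $r\ge 1$, $i,j\in\{-1,0,1\}$; put $t_{ij}(u)=\delta_{ij}+\sum_{r\ge1}t^{(r)}_{ij}u^{-r}$, $T(u)=\sum_{i,j}t_{ij}(u)\otimes e_{ij}$, $T^t(u)=\sum_{i,j}t_{ij}(u)\otimes e_{-j,-i}$, $T_1(u)=\sum t_{ij}(u)\otimes e_{ij}\otimes 1$, $T_2(v)=\sum t_{ij}(v)\otimes 1\otimes e_{ij}$. The defining relations are $R(u-v)T_1(u)T_2(v)=T_2(v)T_1(u)R(u-v)$ and $T(u)T^t(u+\frac12)=T^t(u+\frac12)T(u)=1$. The Gauss generators are the unique series $k_i(u)\in 1+u^{-1}Y_R(\mathfrak{so}_3)[[u^{-1}]]$ ($i=-1,0,1$)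 and $e_{ij}(u),f_{ji}(u)\in u^{-1}Y_R(\mathfrak{so}_3)[[u^{-1}]]$ ($-1\le i<j\le1$) such that $T(u)=F(u)K(u)E(u)$, where $F(u)$ is the lower unitriangular matrix with below-diagonal entries $F_{0,-1}=f_{0,-1}(u)$, $F_{1,-1}=f_{1,-1}(u)$, $F_{1,0}=f_{1,0}(u)$, $K(u)=\mathrm{diag}(k_{-1}(u),k_0(u),k_1(u))$, and $E(u)$ is the upper unitriangular matrix with above-diagonal entries $E_{-1,0}=e_{-1,0}(u)$, $E_{-1,1}=e_{-1,1}(u)$, $E_{0,1}=e_{01}(u)$ (rows/columns indexed by $-1,0,1$). *)

From HB Require Import structures.
From mathcomp Require Import all_boot all_order all_algebra.
Set Implicit Arguments. Unset Strict Implicit. Unset Printing Implicit Defensive.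
Import Order.TTheory GRing.Theory Num.Theory.
Local Open Scope ring_scope.

(* Index convention: the index set {-1,0,1} is encoded by 'I_3 via
   0 <-> -1, 1 <-> 0, 2 <-> 1 (order preserving).  Negation i |-> -i is rev_ord. *)
Notation I3 := 'I_3.
Definition negI (i : I3) : I3 := rev_ord i.

Section Yangian.
Variables (F : numClosedFieldType) (A : algType F).

(* A formal series in 1 + u^{-1}A[[u^{-1}]] or u^{-1}A[[u^{-1}]] is represented
   by its coefficient sequence: s n is the coefficient of u^{-n}. *)
Definition ser := nat -> A.

Definition mulser (s1 s2 : ser) : ser :=
  fun n => \sum_(k < n.+1) s1 k * s2 (n - k)%N.

(* Coefficient of u^{-n} in (u + c)^{-r}, expanded in u^{-1}. *)
Definition shc (c : F) (r n : nat) : F :=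
  if r == 0%N then (n == 0%N)%:R
  else if (r <= n)%N then (-1) ^+ (n - r) * ('C(n.-1, n - r))%:R * c ^+ (n - r)
  else 0.

(* s(u + c), re-expanded as a series in u^{-1}. *)
Definition shift (c : F) (s : ser) : ser :=
  fun n => \sum_(r < n.+1) shc c r n *: s r.

(* Generators t_ij^{(r)} (r >= 1) are given by t i j r; the series t_ij(u). *)
Definition tser (t : I3 -> I3 -> nat -> A) (i j : I3) : ser :=
  fun r => if r == 0%N then (i == j)%:R else t i j r.

(* Two-variable coefficient functions: f m n = coefficient of u^{-m} v^{-n},
   m n : int (coefficient zero when an exponent is positive). *)
Definition tz (t : I3 -> I3 -> nat -> A) (i j : I3) (k : int) : A :=
  match k with Posz n => tser t i j n | Negz _ => 0 end.

(* multiplication by w = u - v *)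
Definition wop (f : int -> int -> A) : int -> int -> A :=
  fun m n => f (m + 1) n - f m (n + 1).
(* multiplication by w - 1/2 *)
Definition wop1 (f : int -> int -> A) : int -> int -> A :=
  fun m n => wop f m n - (2%:R : F)^-1 *: f m n.

(* Entry ((i,j),(k,l)) of Rt(w) = w(w-1/2) R(w) = w(w-1/2) - (w-1/2) P + w Q,
   acting (by multiplication) on a coefficient function f.  Here
   (e_ik (x) e_jl) has P-entry [i=l][j=k] and Q-entry [j=-i][l=-k]. *)
Definition Rop (i j k l : I3) (f : int -> int -> A) : int -> int -> A :=
  fun m n =>
    (if (i == k) && (j == l) then wop (wop1 f) m n else 0)
  - (if (i == l) && (j == k) then wop1 f m n else 0)
  + (if (j == negI i) && (l == negI k) then wop f m n else 0).

(* RTT relation, multiplied by (u-v)(u-v-1/2):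
   Rt(u-v) T1(u) T2(v) = T2(v) T1(u) Rt(u-v), entry ((a,b),(c,d)),
   with (T1(u)T2(v))_{(p,q),(c,d)} = t_pc(u) t_qd(v) and
   (T2(v)T1(u))_{(a,b),(p,q)} = t_bq(v) t_ap(u). *)
Definition RTT_rel (t : I3 -> I3 -> nat -> A) : Prop :=
  forall (a b c d : I3) (m n : int),
    \sum_(p : I3) \sum_(q : I3)
        Rop a b p q (fun x y => tz t p c x * tz t q d y) m n
  = \sum_(p : I3) \sum_(q : I3)
        Rop p q c d (fun x y => tz t b q y * tz t a p x) m n.

(* T(u) T^t(u+1/2) = 1 = T^t(u+1/2) T(u), where (T^t)_{ab}(u) = t_{-b,-a}(u). *)
Definition unitary_rel (t : I3 -> I3 -> nat -> A) : Prop :=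
  (forall (a c : I3) (n : nat),
     \sum_(b : I3) mulser (tser t a b) (shift (2%:R^-1) (tser t (negI c) (negI b))) n
     = ((a == c) && (n == 0%N))%:R)
  /\
  (forall (a c : I3) (n : nat),
     \sum_(b : I3) mulser (shift (2%:R^-1) (tser t (negI b) (negI a))) (tser t b c) n
     = ((a == c) && (n == 0%N))%:R).

(* Gauss decomposition T(u) = F(u) K(u) E(u).
   k i : series of k_i(u) (constant term 1); e i j (i < j) : series e_ij(u);
   f i j (i > j) : series f_ij(u) (constant term 0). *)
Definition Fser (f : I3 -> I3 -> ser) (i j : I3) : ser :=
  if i == j then (fun r => (r == 0%N)%:R)
  else if (j < i)%N then f i j else (fun _ => 0).
Definition Eser (e : I3 -> I3 -> ser) (i j : I3) : ser :=
  if i == j then (fun r => (r == 0%N)%:R)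
  else if (i < j)%N then e i j else (fun _ => 0).

Definition gauss_decomp (t : I3 -> I3 -> nat -> A)
  (k : I3 -> ser) (e f : I3 -> I3 -> ser) : Prop :=
  (forall i, k i 0%N = 1) /\
  (forall i j : I3, (i < j)%N -> e i j 0%N = 0) /\
  (forall i j : I3, (j < i)%N -> f i j 0%N = 0) /\
  (forall (i j : I3) (n : nat),
     tser t i j n = \sum_(m : I3) mulser (mulser (Fser f i m) (k m)) (Eser e m j) n).

End Yangian.

(* The RTT relation, multiplied by (u-v)(u-v-1/2) as in RTT_rel, is
   specialised at v = u + 1/2, a pole of R.  There the operator
   (u-v)(u-v-1/2) R(u-v) becomes the constant matrix rho = 1/2 + P - Q/2.
   Technically, the specialisation is the functional phi: multiply a
   two-variable coefficient function by v^{-2} and substitute v = u + 1/2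
   (shc c r n is the coefficient of u^{-n} in (u + c)^{-r}).  The entries
   ((-1,-1),(-1,l)) of the specialised relation are three relations between
   x_j = t_{-1,j}(u) and Y_j = (u + 1/2)^{-2} t_{-1,j}(u + 1/2).  By the Gauss
   decomposition x_j = x_{-1} e_{-1,j}(u) and Y_j = Y_{-1} e_{-1,j}(u + 1/2), so
   these relations show that x_{-1} Y_{-1} times the left-hand side vanishes;
   since x_{-1} Y_{-1} = u^{-2} + ... is not a zero divisor, the lemma follows. *)

From HB Require Import structures.
From mathcomp Require Import all_boot all_order all_algebra.
From mathcomp Require Import zify ring.
From Stdlib Require Import FunctionalExtensionality.
Set Implicit Arguments. Unset Strict Implicit. Unset Printing Implicit Defensive.
Import Order.TTheory GRing.Theory Num.Theory.
Local Open Scope ring_scope.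

Notation idx_m1 := (ord0 : I3).
Notation idx_0 := (lift ord0 (ord0 : 'I_2) : I3).
Notation idx_p1 := (lift ord0 (lift ord0 (ord0 : 'I_1)) : I3).

Section NatSums.
Variable V : zmodType.

Lemma sum_widen (m n : nat) (G : nat -> V) : (m <= n)%N ->
  (forall i, (m <= i < n)%N -> G i = 0) ->
  \sum_(i < m) G i = \sum_(i < n) G i.
Proof.
move=> le_mn G0; rewrite -!(big_mkord xpredT).
rewrite (big_cat_nat (leq0n m) le_mn) /= [X in _ = _ + X]big_nat_cond.
by rewrite [X in _ = _ + X]big1 ?addr0 // => i /andP[/G0].
Qed.

Lemma sum_triangle (n : nat) (G : nat -> nat -> V) :
  \sum_(k < n.+1) \sum_(i < k.+1) G i (k - i)%N
  = \sum_(i < n.+1) \sum_(j < (n - i).+1) G i j.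
Proof.
elim: n => [|n IH]; first by rewrite !big_ord_recl !big_ord0.
rewrite big_ord_recr /= IH.
have row_split (i : 'I_n.+2) : \sum_(j < (n.+1 - i).+1) G i j =
    (\sum_(j < (n - i).+1) G i j) *+ (i < n.+1)%N + G i (n.+1 - i)%N.
  rewrite big_ord_recr /=; congr (_ + _).
  have [lt_in|le_ni] := ltnP i n.+1; first by rewrite mulr1n subSn // -ltnS.
  have -> : (n.+1 - i = 0)%N by lia.
  by rewrite big_ord0 mulr0n.
rewrite (eq_bigr _ (fun i _ => row_split i)) big_split /=; congr (_ + _).
rewrite [RHS]big_ord_recr /= ltnn mulr0n addr0.
by apply: eq_bigr => i _; rewrite ltn_ord mulr1n.
Qed.

Lemma sum_shift1 (B : nat) (h : nat -> V) :
  \sum_(i < B) h i.+1 = \sum_(i < B) h i + h B - h 0%N.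
Proof.
have -> : \sum_(i < B) h i.+1 = \sum_(i < B.+1) h i - h 0%N.
  by rewrite big_ord_recl addrC addKr.
by rewrite big_ord_recr.
Qed.

End NatSums.

Section ShiftCoefficients.
Variable F : numClosedFieldType.
Implicit Types c : F.

Lemma shc_n0 c r : shc c r 0 = (r == 0)%:R.
Proof. by case: r. Qed.

Lemma shc_lt c r n : (n < r)%N -> shc c r n = 0.
Proof. by rewrite /shc; case: r => // r; rewrite ltnNge => /negbTE ->. Qed.

(* Coefficientwise form of (u + c) (u + c)^{-(j+1)} = (u + c)^{-j}. *)
Lemma shc_rec c j M : shc c j.+1 M.+1 + c * shc c j.+1 M = shc c j M.
Proof.
case: j => [|j].
  rewrite /shc /= subn1 /= binn mulr1.
  case: M => [|m] /=; first by rewrite mulr0 addr0 expr0 mul1r.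
  by rewrite subn1 /= binn mulr1 !exprS; ring.
have [lt_Mj|lt_jM|->] := ltngtP M j.+1.
- by rewrite !shc_lt ?mulr0 ?addr0 //; lia.
- have -> : M = (j.+2 + (M - j.+2))%N by lia.
  set e := (M - j.+2)%N; rewrite /shc /=.
  have -> : (j.+1 < (j.+2 + e).+1)%N by lia.
  have -> : (j.+1 < (j.+2 + e))%N by lia.
  have -> : (j < (j.+2 + e))%N by lia.
  have -> : ((j.+2 + e).+1 - j.+2 = e.+1)%N by lia.
  have -> : ((j.+2 + e) - j.+2 = e)%N by lia.
  have -> : ((j.+2 + e) - j.+1 = e.+1)%N by lia.
  (* Pascal's rule for the binomial coefficients. *)
  rewrite addSn binS natrD !exprS.
  set x := (-1) ^+ e; set y := c ^+ e.
  set a := ('C(_, e.+1))%:R; set b := ('C(_, e))%:R.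
  ring.
- rewrite [shc c j.+2 j.+1]shc_lt // mulr0 addr0 /shc /= !leqnn.
  by rewrite !subnn !bin0.
Qed.

(* Coefficientwise form of (u + c)^{-i} (u + c)^{-j} = (u + c)^{-(i+j)}. *)
Lemma shc_add c n i j :
  \sum_(k < n.+1) shc c i k * shc c j (n - k)%N = shc c (i + j) n.
Proof.
elim: n i j => [|n IH] i j.
  rewrite big_ord_recl big_ord0 addr0 /= !shc_n0 addn_eq0.
  by case: (i == 0%N); case: (j == 0%N); rewrite ?mulr0 ?mulr1 ?mul0r.
case: j => [|j].
  rewrite big_ord_recr /= subnn shc_n0 mulr1 addn0 big1 ?add0r // => k _.
  by rewrite [shc c 0 _]/shc /= subn_eq0 leqNgt ltn_ord mulr0.
rewrite big_ord_recr /= subnn shc_n0 mulr0 addr0.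
have step (k : 'I_n.+1) : shc c i k * shc c j.+1 (n.+1 - k)%N =
    shc c i k * shc c j (n - k)%N - c * (shc c i k * shc c j.+1 (n - k)%N).
  by rewrite subSn ?(leq_ord k) // -(shc_rec c j (n - k)) mulrDr mulrCA addrK.
rewrite (eq_bigr _ (fun k _ => step k)) sumrB -mulr_sumr !IH.
by rewrite -(shc_rec c (i + j) n) -addnS addrK.
Qed.

End ShiftCoefficients.

Section Series.
Variables (F : numClosedFieldType) (A : algType F).
Implicit Types a b s : ser A.

Definition ser1 : ser A := fun r => (r == 0)%:R.

(* Multiplication by u^{-2}. *)
Definition z2 s : ser A := fun n => if n is k.+2 then s k else 0.

Lemma mulserA a b s : mulser (mulser a b) s = mulser a (mulser b s).
Proof.
apply: functional_extensionality => n; rewrite /mulser.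
pose G i j := a i * b j * s (n - (i + j))%N.
transitivity (\sum_(k < n.+1) \sum_(i < k.+1) G i (k - i)%N).
  apply: eq_bigr => k _; rewrite mulr_suml; apply: eq_bigr => i _.
  by rewrite /G subnKC // -ltnS.
rewrite sum_triangle; apply: eq_bigr => i _; rewrite mulr_sumr.
by apply: eq_bigr => j _; rewrite /G mulrA subnDA.
Qed.

Lemma mulser1 s : mulser s ser1 = s.
Proof.
apply: functional_extensionality => n; rewrite /mulser big_ord_recr /= subnn mulr1.
by rewrite big1 ?add0r // => i _; rewrite /ser1 subn_eq0 leqNgt ltn_ord mulr0.
Qed.

Lemma mul1ser s : mulser ser1 s = s.
Proof.
apply: functional_extensionality => n; rewrite /mulser big_ord_recl /= subn0 mul1r.
by rewrite big1 ?addr0 // => i _; rewrite /ser1 mul0r.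
Qed.

Lemma mul0ser s : mulser (fun _ => 0) s = (fun _ => 0).
Proof.
apply: functional_extensionality => n.
by rewrite /mulser big1 // => i _; rewrite mul0r.
Qed.

Lemma mulser_rev a b n : mulser a b n = \sum_(i < n.+1) a (n - i)%N * b i.
Proof.
rewrite /mulser (reindex_inj rev_ord_inj) /=; apply: eq_bigr => i _.
by rewrite subSS subKn // -ltnS.
Qed.

Lemma mulser_z2 a b : mulser (z2 a) b = z2 (mulser a b).
Proof.
apply: functional_extensionality => -[|[|n]]; rewrite /mulser /z2.
- by rewrite big_ord_recl big_ord0 mul0r addr0.
- by rewrite !big_ord_recl big_ord0 !mul0r !addr0.
- by rewrite !big_ord_recl /= !mul0r !add0r.
Qed.

Lemma mulser_comb (x y z : F) a s1 s2 s3 s4 n :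
  mulser a (fun m => x *: s1 m - s2 m + y *: s3 m - z *: s4 m) n =
  x *: mulser a s1 n - mulser a s2 n + y *: mulser a s3 n - z *: mulser a s4 n.
Proof.
rewrite /mulser !scaler_sumr -!sumrB -big_split -sumrB; apply: eq_bigr => i _.
by rewrite mulrBr mulrDr mulrBr -!scalerAr.
Qed.

Lemma mulser_combl (x y : F) s1 s2 b n :
  mulser (fun m => x *: s1 m + y *: s2 m) b n = x *: mulser s1 b n + y *: mulser s2 b n.
Proof.
rewrite /mulser !scaler_sumr -big_split; apply: eq_bigr => i _.
by rewrite mulrDl -!scalerAl.
Qed.

Lemma shift_mul (c : F) a b :
  shift c (mulser a b) = mulser (shift c a) (shift c b).
Proof.
apply: functional_extensionality => n; rewrite /mulser /shift.
(* Both sides equal sum_{i,j} shc c (i + j) n a_i b_j: the left one by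
   regrouping the Cauchy product, the right one by shc_add. *)
pose G i j := shc c (i + j)%N n *: (a i * b j).
transitivity (\sum_(i < n.+1) \sum_(j < n.+1) G i j).
  transitivity (\sum_(k < n.+1) \sum_(i < k.+1) G i (k - i)%N).
    apply: eq_bigr => k _; rewrite scaler_sumr; apply: eq_bigr => i _.
    by rewrite /G subnKC // -ltnS.
  rewrite sum_triangle; apply: eq_bigr => i _; apply: sum_widen; first by lia.
  by move=> j /andP [hj _]; rewrite /G shc_lt ?scale0r //; lia.
symmetry.
transitivity (\sum_(k < n.+1) \sum_(i < n.+1) \sum_(j < n.+1)
     (shc c i k * shc c j (n - k)%N) *: (a i * b j)).
  apply: eq_bigr => k _; rewrite mulr_suml.
  rewrite (@sum_widen _ k.+1 n.+1 (fun i => shc c i k *: a i *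
     \sum_(r < (n - k).+1) shc c r (n - k) *: b r)); last 2 first.
  - by rewrite ltnS -ltnS.
  - by move=> i /andP [hi _]; rewrite shc_lt ?scale0r ?mul0r.
  apply: eq_bigr => i _; rewrite mulr_sumr.
  rewrite (@sum_widen _ (n - k).+1 n.+1
     (fun j => shc c i k *: a i * (shc c j (n - k) *: b j))); last 2 first.
  - by rewrite ltnS leq_subr.
  - by move=> j /andP [hj _]; rewrite (@shc_lt _ c j) ?scale0r ?mulr0.
  by apply: eq_bigr => j _; rewrite -scalerAl -scalerAr scalerA.
rewrite exchange_big; apply: eq_bigr => i _; rewrite exchange_big.
by apply: eq_bigr => j _; rewrite -scaler_suml shc_add.
Qed.

Lemma mulser_cancel (P T : ser A) : P 0%N = 0 -> P 1%N = 0 -> P 2%N = 1 ->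
  (forall n, mulser P T n = 0) -> forall n, T n = 0.
Proof.
move=> P0 P1 P2 PT0 n; elim: n {-2}n (leqnn n) => [|n IH] m le_mn.
  have -> : m = 0%N by lia.
  move: (PT0 2%N); rewrite /mulser !big_ord_recl big_ord0 /= P0 P1 P2.
  by rewrite !mul0r add0r mul1r addr0 add0r.
move: (PT0 m.+2); rewrite /mulser !big_ord_recl /= P0 P1 P2 !mul0r !add0r mul1r.
rewrite big1 => [|i _]; first by rewrite addr0 /bump /= !subSS subn0.
by rewrite IH ?mulr0 // /bump /=; lia.
Qed.

Lemma mulser_shift_z2_low (c : F) (a b : ser A) : a 0%N = 1 -> b 0%N = 1 ->
  let P := mulser a (shift c (z2 b)) in [/\ P 0%N = 0, P 1%N = 0 & P 2%N = 1].
Proof.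
move=> a0 b0 /=; rewrite /mulser /shift /z2 !big_ord_recl !big_ord0 /=.
rewrite !(scaler0, addr0, add0r, mulr0) a0 mul1r b0.
by rewrite /shc /= subnn expr0 bin0 !mulr1 scale1r.
Qed.

End Series.

(* A coefficient function
   f : int -> int -> A (f m n = coefficient of u^{-m} v^{-n}) is multiplied by
   v^{-2} and evaluated at v = u + c; phi f N is the coefficient of u^{-N}.
   The factor v^{-2} makes the specialisation well defined for the functions
   met below, which vanish unless m, n >= -2. *)
Section Specialisation.
Variables (F : numClosedFieldType) (A : algType F) (c : F).

Definition zer (s : ser A) (k : int) : A :=
  match k with Posz n => s n | Negz _ => 0 end.

Definition phi (f : int -> int -> A) (N : nat) : A :=
  \sum_(i < N.+3) \sum_(j < N.+3) shc c j (N.+2 - i) *: f (i%:Z - 2) (j%:Z - 2).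

Definition nonneg_supported (f : int -> int -> A) : Prop :=
  forall (k : nat) (x : int), f (Negz k) x = 0 /\ f x (Negz k) = 0.

(* Index form of phi_wop below: the boundary terms of the two summations by
   parts vanish, and the rest recombines by shc_rec. *)
Lemma phi_wop_nat (N : nat) (g : nat -> nat -> A) :
  (forall j, g 0%N j = 0) -> (forall i, g i 0%N = 0) ->
  \sum_(i < N.+3) \sum_(j < N.+3) shc c j (N.+2 - i) *: (g i.+1 j - g i j.+1)
  = - c *: \sum_(i < N.+3) \sum_(j < N.+3) shc c j (N.+2 - i) *: g i j.
Proof.
move=> g0_ g_0.
transitivity (\sum_(i < N.+3) \sum_(j < N.+3) shc c j (N.+3 - i.+1) *: g i.+1 j
  - \sum_(i < N.+3) \sum_(j < N.+3) shc c j.+1.-1 (N.+2 - i) *: g i j.+1).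
  rewrite -sumrB; apply: eq_bigr => i _; rewrite -sumrB.
  by apply: eq_bigr => j _; rewrite scalerBr.
rewrite [X in X - _ = _]exchange_big.
under eq_bigr => j _ do rewrite (sum_shift1 _ (fun i => shc c j (N.+3 - i) *: g i j)).
under [X in _ - X = _]eq_bigr => i _ do
  rewrite (sum_shift1 _ (fun j => shc c j.-1 (N.+2 - i) *: g i j)).
rewrite /= !big_split /=.
have top_i : \sum_(j < N.+3) shc c j (N.+3 - N.+3) *: g N.+3 j = 0.
  apply: big1 => j _; rewrite subnn shc_n0.
  by case: (nat_of_ord j) => [|k] /=; rewrite ?g_0 ?scaler0 ?scale0r.
have bot_i : \sum_(j < N.+3) - (shc c j (N.+3 - 0) *: g 0%N j) = 0.
  by apply: big1 => j _; rewrite g0_ scaler0 oppr0.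
have top_j : \sum_(i < N.+3) shc c N.+2 (N.+2 - i) *: g i N.+3 = 0.
  apply: big1 => i _; case: (nat_of_ord i) => [|k]; first by rewrite g0_ scaler0.
  by rewrite shc_lt ?scale0r //; lia.
have bot_j : \sum_(i < N.+3) - (shc c 0 (N.+2 - i) *: g i 0%N) = 0.
  by apply: big1 => j _; rewrite g_0 scaler0 oppr0.
rewrite top_i bot_i top_j bot_j !addr0.
rewrite exchange_big -sumrB scaler_sumr; apply: eq_bigr => i _.
rewrite -sumrB scaler_sumr; apply: eq_bigr => j _.
case: (nat_of_ord j) => [|k]; first by rewrite g_0 !scaler0 subr0.
rewrite -scalerBl scalerA subSn ?(leq_ord i) // -(shc_rec c k).
by rewrite opprD addNKr mulNr.
Qed.

Lemma phi_wop (f : int -> int -> A) N :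
  (forall y, f (-2) y = 0) -> (forall x, f x (-2) = 0) ->
  phi (wop f) N = - c *: phi f N.
Proof.
have shift_index (i : nat) : i%:Z - 2 + 1 = (i.+1)%:Z - 2 by lia.
move=> f_2 f__2; rewrite /phi /wop.
under eq_bigr do under eq_bigr do rewrite !shift_index.
apply: (@phi_wop_nat N (fun i j => f (i%:Z - 2) (j%:Z - 2))) => [j|i].
  by rewrite sub0r f_2.
by rewrite sub0r f__2.
Qed.

Lemma phi_wop_supported (f : int -> int -> A) N :
  nonneg_supported f -> phi (wop f) N = - c *: phi f N.
Proof. by move=> f0; apply: phi_wop => [y|x]; [exact: (f0 1%N y).1|exact: (f0 1%N x).2]. Qed.

Lemma zer_sub2 (s : ser A) (i : nat) : zer s (i%:Z - 2) = z2 s i.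
Proof.
case: i => [|[|k]] //.
by have -> : (k.+2)%:Z - 2 = k%:Z by rewrite -addn2 PoszD addrK.
Qed.

Lemma phi_prod (a b : ser A) N :
  phi (fun x y => zer a x * zer b y) N = mulser a (shift c (z2 b)) N.
Proof.
rewrite /phi; under eq_bigr do under eq_bigr do rewrite !zer_sub2.
rewrite big_ord_recl big1 ?add0r => [|j _]; last by rewrite mul0r scaler0.
rewrite big_ord_recl big1 ?add0r => [|j _]; last by rewrite mul0r scaler0.
rewrite /mulser; apply: eq_bigr => i _; rewrite /shift mulr_sumr /=.
rewrite (@sum_widen _ (N - i).+1 N.+3
  (fun j => a i * (shc c j (N - i) *: z2 b j))) => [|//|j /andP[lt_j _]]; first 1 last.
- by lia.
- by rewrite shc_lt ?scale0r ?mulr0.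
by apply: eq_bigr => j _; rewrite -scalerAr /bump /= !add1n subSS.
Qed.

Lemma phi_prod_rev (a b : ser A) N :
  phi (fun x y => zer b y * zer a x) N = mulser (shift c (z2 b)) a N.
Proof.
rewrite /phi; under eq_bigr do under eq_bigr do rewrite !zer_sub2.
rewrite big_ord_recl big1 ?add0r => [|j _]; last by rewrite mulr0 scaler0.
rewrite big_ord_recl big1 ?add0r => [|j _]; last by rewrite mulr0 scaler0.
rewrite mulser_rev; apply: eq_bigr => i _; rewrite /shift mulr_suml /=.
rewrite (@sum_widen _ (N - i).+1 N.+3
  (fun j => (shc c j (N - i) *: z2 b j) * a i)) => [|//|j /andP[lt_j _]]; first 1 last.
- by lia.
- by rewrite shc_lt ?scale0r ?mul0r.
by apply: eq_bigr => j _; rewrite -scalerAl /bump /= !add1n subSS.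
Qed.

Lemma prod_supported (a b : ser A) : nonneg_supported (fun x y => zer a x * zer b y).
Proof. by move=> k x; rewrite /= mul0r mulr0. Qed.

Lemma prod_rev_supported (a b : ser A) :
  nonneg_supported (fun x y => zer b y * zer a x).
Proof. by move=> k x; rewrite /= mul0r mulr0. Qed.

Lemma phi_add (f g : int -> int -> A) N :
  phi (fun m n => f m n + g m n) N = phi f N + phi g N.
Proof.
rewrite /phi -big_split; apply: eq_bigr => i _; rewrite -big_split.
by apply: eq_bigr => j _; rewrite scalerDr.
Qed.

Lemma phi_sub (f g : int -> int -> A) N :
  phi (fun m n => f m n - g m n) N = phi f N - phi g N.
Proof.
rewrite /phi -sumrB; apply: eq_bigr => i _; rewrite -sumrB.
by apply: eq_bigr => j _; rewrite scalerBr.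
Qed.

Lemma phi_scale (x : F) (f : int -> int -> A) N :
  phi (fun m n => x *: f m n) N = x *: phi f N.
Proof.
rewrite /phi scaler_sumr; apply: eq_bigr => i _; rewrite scaler_sumr.
by apply: eq_bigr => j _; rewrite !scalerA mulrC.
Qed.

Lemma phi_if (b : bool) (f : int -> int -> A) N :
  phi (fun m n => if b then f m n else 0) N = if b then phi f N else 0.
Proof.
case: b => //; rewrite /phi big1 // => i _.
by rewrite big1 // => j _; rewrite scaler0.
Qed.

Lemma phi_sum (I : finType) (G : I -> int -> int -> A) N :
  phi (fun m n => \sum_(p : I) G p m n) N = \sum_(p : I) phi (G p) N.
Proof.
rewrite /phi; under eq_bigr do under eq_bigr do rewrite scaler_sumr.
by rewrite [RHS]exchange_big; apply: eq_bigr => i _; rewrite exchange_big.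
Qed.

End Specialisation.

Section RMatrixAtHalf.
Variables (F : numClosedFieldType) (A : algType F).
Local Notation c := (2%:R^-1 : F).

(* Entry ((i,j),(k,l)) of (w(w-1/2) R(w)) at w = -1/2, that is of 1/2 + P - Q/2. *)
Definition rho (i j k l : I3) : F :=
  (if (i == k) && (j == l) then c else 0) + (if (i == l) && (j == k) then 1 else 0)
  - (if (j == negI i) && (l == negI k) then c else 0).

Lemma phi_wop1 (f : int -> int -> A) N :
  nonneg_supported f -> phi c (wop1 f) N = - phi c f N.
Proof.
move=> f0; rewrite /wop1 phi_sub phi_scale phi_wop_supported //.
by rewrite -scalerBl -opprD -mulr2n -[c *+ 2]mulr_natr mulVf ?pnatr_eq0 ?scaleN1r.
Qed.

Lemma phi_wop_wop1 (f : int -> int -> A) N :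
  nonneg_supported f -> phi c (wop (wop1 f)) N = c *: phi c f N.
Proof.
move=> f0; rewrite phi_wop ?phi_wop1 ?scalerN ?scaleNr ?opprK // => [y|x];
  rewrite /wop1 /wop.
- by rewrite !(proj1 (f0 _ _)) scaler0 subrr subr0.
- by rewrite !(proj2 (f0 _ _)) scaler0 subrr subr0.
Qed.

Lemma phi_Rop (i j k l : I3) (f : int -> int -> A) N :
  nonneg_supported f -> phi c (Rop i j k l f) N = rho i j k l *: phi c f N.
Proof.
move=> f0; rewrite /Rop phi_add phi_sub !phi_if.
rewrite phi_wop_wop1 // phi_wop1 // phi_wop_supported // /rho; case: (_ && _); case: (_ && _); case: (_ && _);
by rewrite ?(scalerDl, scalerBl, oppr0, opprK, scaleNr, scale0r, scale1r, add0r, addr0, subr0).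
Qed.

Lemma phi_Rop_prod (i j k l : I3) (a b : ser A) N :
  phi c (Rop i j k l (fun x y => zer a x * zer b y)) N
  = rho i j k l *: mulser a (shift c (z2 b)) N.
Proof. by rewrite phi_Rop ?phi_prod //; apply: prod_supported. Qed.

Lemma phi_Rop_prod_rev (i j k l : I3) (a b : ser A) N :
  phi c (Rop i j k l (fun x y => zer b y * zer a x)) N
  = rho i j k l *: mulser (shift c (z2 b)) a N.
Proof. by rewrite phi_Rop ?phi_prod_rev //; apply: prod_rev_supported. Qed.

End RMatrixAtHalf.
Arguments rho {F} i j k l.

Section RTTAtHalf.
Variables (F : numClosedFieldType) (A : algType F) (t : I3 -> I3 -> nat -> A).
Hypothesis RTT : RTT_rel t.
Local Notation c := (2%:R^-1 : F).
Local Notation Y i j := (shift c (z2 (tser t i j))).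

Lemma rtt_at_half (a b k l : I3) N :
  \sum_(p : I3) \sum_(q : I3) rho a b p q *: mulser (tser t p k) (Y q l) N
  = \sum_(p : I3) \sum_(q : I3) rho p q k l *: mulser (Y b q) (tser t a p) N.
Proof.
have /(congr1 (fun f => phi c f N)) :
  (fun m n => \sum_(p : I3) \sum_(q : I3)
      Rop a b p q (fun x y => tz t p k x * tz t q l y) m n)
  = (fun m n => \sum_(p : I3) \sum_(q : I3)
      Rop p q k l (fun x y => tz t b q y * tz t a p x) m n).
  by do 2 apply: functional_extensionality => ?; exact: RTT.
rewrite !phi_sum; under eq_bigr do rewrite phi_sum.
under [RHS]eq_bigr do rewrite phi_sum.
under eq_bigr do under eq_bigr do rewrite phi_Rop_prod.
by under [RHS]eq_bigr do under eq_bigr do rewrite phi_Rop_prod_rev.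
Qed.

End RTTAtHalf.

Section FirstRow.
Variables (F : numClosedFieldType) (A : algType F) (t : I3 -> I3 -> nat -> A).
Hypothesis RTT : RTT_rel t.
Local Notation c := (2%:R^-1 : F).
Local Notation x j := (tser t idx_m1 j).
Local Notation Y j := (shift c (z2 (tser t idx_m1 j))).

Lemma half_add1_neq0 : c + 1 != 0.
Proof. by rewrite lt0r_neq0 // addr_gt0 // invr_gt0 ltr0n. Qed.

(* Only the term p = q = -1 survives on the left-hand side. *)
Lemma rtt_first_row (l : I3) N :
  (c + 1) *: mulser (x idx_m1) (Y l) N
  = \sum_(p : I3) \sum_(q : I3) rho p q idx_m1 l *: mulser (Y q) (x p) N.
Proof.
rewrite -rtt_at_half // !big_ord_recl !big_ord0 /rho /=.
by rewrite !(subr0, addr0, add0r, scale0r).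
Qed.

Lemma rtt_m1m1 N : mulser (x idx_m1) (Y idx_m1) N = mulser (Y idx_m1) (x idx_m1) N.
Proof.
apply: (scalerI half_add1_neq0); rewrite rtt_first_row.
by rewrite !big_ord_recl !big_ord0 /rho /= !(subr0, addr0, add0r, scale0r).
Qed.

Lemma rtt_m10 N : (c + 1) *: mulser (x idx_m1) (Y idx_0) N
  = c *: mulser (Y idx_0) (x idx_m1) N + mulser (Y idx_m1) (x idx_0) N.
Proof.
rewrite rtt_first_row !big_ord_recl !big_ord0 /rho /=.
by rewrite !(subr0, addr0, add0r, scale0r, scale1r).
Qed.

Lemma rtt_m1p1 N : 3%:R *: mulser (x idx_m1) (Y idx_p1) N
  = mulser (Y idx_m1) (x idx_p1) N - mulser (Y idx_0) (x idx_0) N.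
Proof.
have := rtt_first_row idx_p1 N.
rewrite !big_ord_recl !big_ord0 /rho /= !(subr0, addr0, add0r, subrr, scale0r).
have half_neq0 : c != 0 by rewrite invr_eq0 pnatr_eq0.
have -> : 1 - c = c by field.
move=> E; apply: (scalerI half_neq0); rewrite scalerA.
have -> : c * 3%:R = c + 1 by field.
by rewrite E scaleNr scalerBr addrC.
Qed.
End FirstRow.

Lemma gauss_first_row (F : numClosedFieldType) (A : algType F)
  (t : I3 -> I3 -> nat -> A) (k : I3 -> ser A) (e f : I3 -> I3 -> ser A) :
  gauss_decomp t k e f -> forall j, tser t idx_m1 j = mulser (k idx_m1) (Eser e idx_m1 j).
Proof.
move=> [_ [_ [_ tFKE]]] j; apply: functional_extensionality => n.
rewrite tFKE !big_ord_recl big_ord0 /=.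
have -> : Fser f idx_m1 idx_m1 = @ser1 F A by [].
have -> : Fser f idx_m1 idx_0 = (fun _ => 0) by [].
have -> : Fser f idx_m1 idx_p1 = (fun _ => 0) by [].
by rewrite mul1ser !mul0ser !addr0.
Qed.

Lemma final_combination (F : numClosedFieldType) (V : lmodType F) (u v w : V) :
  (u - v) - u + 3%:R *: w - 2%:R *: ((2%:R^-1 + 1) *: w + (- 2%:R^-1) *: v) = 0.
Proof.
rewrite scalerDr !scalerA (_ : 2%:R * (2%:R^-1 + 1) = 3%:R :> F); last by field.
rewrite (_ : 2%:R * - 2%:R^-1 = -1 :> F); last by field.
by rewrite scaleN1r addrAC opprB addrA subrK [u - v - u]addrAC subrr add0r addNr.
Qed.

Section Lemma38.
Variables (F : numClosedFieldType) (A : algType F) (t : I3 -> I3 -> nat -> A).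
Variables (k : I3 -> ser A) (e f : I3 -> I3 -> ser A).
Hypotheses (RTT : RTT_rel t) (G : gauss_decomp t k e f).
Local Notation c := (2%:R^-1 : F).
Local Notation x j := (tser t idx_m1 j).
Local Notation X := (x idx_m1).
Local Notation Y j := (shift c (z2 (x j))).
Local Notation e1 := (e idx_m1 idx_0).
Local Notation e2 := (e idx_m1 idx_p1).

Lemma first_row_e (j : I3) : (0 < j)%N -> x j = mulser X (e idx_m1 j).
Proof.
move=> j_gt0; rewrite !(gauss_first_row G) /Eser eqxx mulser1.
by case: eqP j_gt0 => [<-|_ ->].
Qed.

Lemma first_row_Y (j : I3) : (0 < j)%N -> Y j = mulser (Y idx_m1) (shift c (e idx_m1 j)).
Proof. by move=> j_gt0; rewrite first_row_e // -mulser_z2 shift_mul. Qed.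

Lemma comm_X_Ym1 : mulser X (Y idx_m1) = mulser (Y idx_m1) X.
Proof. by apply: functional_extensionality => N; apply: rtt_m1m1. Qed.

Lemma lemma38_scaled N :
  mulser (mulser X (Y idx_m1)) (fun n =>
      3%:R *: shift c e2 n - e2 n
    + 3%:R *: mulser (shift c e1) e1 n - 2%:R *: mulser e1 e1 n) N = 0.
Proof.
rewrite mulser_comb.
have -> : mulser (mulser X (Y idx_m1)) (shift c e2) N = mulser X (Y idx_p1) N.
  by rewrite mulserA -first_row_Y.
have -> : mulser (mulser X (Y idx_m1)) e2 N = mulser (Y idx_m1) (x idx_p1) N.
  by rewrite comm_X_Ym1 mulserA -first_row_e.
have -> : mulser (mulser X (Y idx_m1)) (mulser (shift c e1) e1) N
    = mulser (mulser X (Y idx_0)) e1 N.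
  by rewrite -mulserA [mulser (mulser X _) _]mulserA -first_row_Y.
have -> : mulser (mulser X (Y idx_m1)) (mulser e1 e1) N
    = mulser (mulser (Y idx_m1) (x idx_0)) e1 N.
  by rewrite comm_X_Ym1 -mulserA [mulser (mulser (Y idx_m1) _) _]mulserA -first_row_e.
(* The entry l = 0 eliminates Y_{-1} x_0 and the entry l = 1 eliminates X Y_1. *)
have Ym1_x0 : mulser (Y idx_m1) (x idx_0)
    = fun m => (c + 1) *: mulser X (Y idx_0) m + (- c) *: mulser (Y idx_0) X m.
  by apply: functional_extensionality => m; rewrite rtt_m10 // scaleNr addrC addKr.
rewrite Ym1_x0 mulser_combl [mulser (mulser (Y idx_0) X) _]mulserA -first_row_e //.
rewrite rtt_m1p1 //.
exact: final_combination.
Qed.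

End Lemma38.

Theorem lemma3p8 (F : numClosedFieldType) (A : algType F)
  (t : I3 -> I3 -> nat -> A) (k : I3 -> ser A) (e f : I3 -> I3 -> ser A) :
  RTT_rel t -> unitary_rel t -> gauss_decomp t k e f ->
  forall n : nat,
    3%:R *: shift (2%:R^-1) (e (inord 0) (inord 2)) n
    - e (inord 0) (inord 2) n
    + 3%:R *: mulser (shift (2%:R^-1) (e (inord 0) (inord 1))) (e (inord 0) (inord 1)) n
    - 2%:R *: mulser (e (inord 0) (inord 1)) (e (inord 0) (inord 1)) n = 0.
Proof.
move=> RTT _ G.
have [-> -> ->] : [/\ inord 0 = idx_m1, inord 1 = idx_0 & inord 2 = idx_p1].
  by split; apply/val_inj/inordK.
have X0 : tser t idx_m1 idx_m1 0%N = 1 by [].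
have [P0 P1 P2] := mulser_shift_z2_low (2%:R^-1) X0 X0.
apply: (mulser_cancel P0 P1 P2) => N.
exact: lemma38_scaled RTT G N.
Qed.
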